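(* Let $f$ be a real-valued function of two arguments that is monotonic (non-decreasing) in its first argument and anti-monotonic (non-increasing) in its second argument. Let $x$ and $y$ be variables, each hosted on a single process of a computation, such that either both $x$ and $y$ are monotonically non-decreasing or both are monotonically non-increasing. Then, for every constant $c$ and every $\mathtt{relop} \in \{<, \leq, >, \geq\}$, the predicate $f(x,y)\ \mathtt{relop}\ c$ is regular.
   Context: A computation is a directed graph $\langle E, \rightarrow\rangle$ whose vertices (events) are partitioned among processes $p_1,\dots,p_n$; the events of each process are totally ordered in real time, each process $p_i$ has a fictitious initial event $\bot_i$ (first) and final event $\top_i$ (last), the path relation of the graph contains Lamport's happened-before relation, all initial events lie in one strongly connected component and all final events lie in one strongly connected component. A subset $C \subseteq E$ is a consistent cut if for every edge $(u,v)$, $v \in C$ implies $u \in C$; $\emptyset$ and $E$ are the trivial consistent cuts. A (global) predicate is a boolean function of process variables, evaluated at a non-trivial consistent cut $C$ using the values of the variables immediately after all events in $C$ have been executed; for a variable $x$ hosted on a process, $x(C)$ is its value after the last event of that process in $C$. A variable is monotonically non-decreasing (resp. non-increasing) if its value never decreases (resp. increases) along the events of its process. A predicate $b$ is regular if whenever consistent cuts $C_1$ and $C_2$ satisfy $b$, so do $C_1 \cap C_2$ and $C_1 \cup C_2$. *)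

From HB Require Import structures.
From mathcomp Require Import all_boot all_order all_algebra.
From mathcomp Require Import reals.
Set Implicit Arguments. Unset Strict Implicit. Unset Printing Implicit Defensive.
Import Order.TTheory GRing.Theory Num.Theory.
Local Open Scope ring_scope.

Record computation (n : nat) (E : finType) := Computation {
  edge : rel E;
  proc : E -> 'I_n;
  po   : rel E;
  msg  : rel E;
  bot  : 'I_n -> E;                  (* fictitious initial events            *)
  top  : 'I_n -> E;                  (* fictitious final events              *)
  po_proc  : forall e f, po e f -> proc e = proc f;
  po_irr   : forall e, ~~ po e e;
  po_trans : forall e f g, po e f -> po f g -> po e g;
  po_total : forall e f, proc e = proc f -> e <> f -> po e f \/ po f e;
  bot_proc : forall i, proc (bot i) = i;
  top_proc : forall i, proc (top i) = i;
  bot_first : forall i e, proc e = i -> e <> bot i -> po (bot i) e;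
  top_last  : forall i e, proc e = i -> e <> top i -> po e (top i);
  (* the path relation contains Lamport's happened-before relation, i.e. the
     transitive closure of process order and message order *)
  hb_po  : forall e f, po e f -> connect edge e f;
  hb_msg : forall e f, msg e f -> connect edge e f;
  bot_scc : forall i j, connect edge (bot i) (bot j);
  top_scc : forall i j, connect edge (top i) (top j)
}.

Section Cuts.
Variables (n : nat) (E : finType) (G : computation n E).

Definition consistent (C : {set E}) : Prop :=
  forall u v, edge G u v -> v \in C -> u \in C.

Definition nontrivial_cut (C : {set E}) : Prop :=
  consistent C /\ C != set0 /\ C != [set: E].

Definition last_in (C : {set E}) (p : 'I_n) (e : E) : bool :=
  [&& e \in C, proc G e == p &
      [forall f, ((f \in C) && (proc G f == p)) ==> ~~ po G e f]].

(* A variable hosted on process p: val e is its value immediately after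
   event e (meaningful for events e of process p). *)
Definition var_at (R : Type) (p : 'I_n) (val : E -> R) (C : {set E}) : R :=
  match [pick e | last_in C p e] with
  | Some e => val e
  | None => val (bot G p)   (* never used on non-trivial consistent cuts *)
  end.

Definition nondecreasing_var (R : realType) (p : 'I_n) (val : E -> R) : Prop :=
  forall e f, proc G e = p -> proc G f = p -> po G e f -> val e <= val f.

Definition nonincreasing_var (R : realType) (p : 'I_n) (val : E -> R) : Prop :=
  forall e f, proc G e = p -> proc G f = p -> po G e f -> val f <= val e.

Definition regular (b : {set E} -> Prop) : Prop :=
  forall C1 C2, nontrivial_cut C1 -> nontrivial_cut C2 -> b C1 -> b C2 ->
    b (C1 :&: C2) /\ b (C1 :|: C2).

End Cuts.

Inductive relop := RLt | RLe | RGt | RGe.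

Definition eval_relop (R : realType) (op : relop) (a c : R) : bool :=
  match op with
  | RLt => a < c
  | RLe => a <= c
  | RGt => a > c
  | RGe => a >= c
  end.

(* On a non-trivial consistent cut every process has a unique last event, so a
   variable hosted on process p takes its value at that event.  Of two cuts, one
   contains the other's last event on p; hence, for a non-decreasing variable,
   the intersection of the cuts yields the smaller of the two values and the
   union the larger one (the roles swap for non-increasing variables).  When x
   and y move in the same direction, the pair (x, y) on the meet or the join is
   thus a comonotone choice of (x1 or x2, y1 or y2), and since f grows in x and
   falls in y, f at that pair lies between f x1 y1 and f x2 y2.  Each predicate
   [_ relop c] is order-convex, so it is inherited from the two cuts. *)

From HB Require Import structures.
From mathcomp Require Import all_boot all_order all_algebra.
From mathcomp Require Import reals.
Import Order.TTheory GRing.Theory Num.Theory.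
Local Open Scope ring_scope.
Set Implicit Arguments. Unset Strict Implicit.

Definition order_convex d (T : porderType d) (P : pred T) : Prop :=
  forall u v w, (u <= v)%O -> (v <= w)%O -> P u -> P w -> P v.

Lemma order_convex_dual d (T : porderType d) (P : pred T) :
  order_convex P -> order_convex (P : pred T^d).
Proof. by move=> P_convex u v w uv vw Pu Pw; exact: P_convex vw uv Pw Pu. Qed.

Lemma eval_relop_convex (R : realType) (op : relop) (c : R) :
  order_convex (eval_relop op ^~ c).
Proof.
case: op => u v w /= uv vw Pu Pw.
- exact: le_lt_trans vw Pw.
- exact: le_trans vw Pw.
- exact: lt_le_trans Pu uv.
- exact: le_trans Pu uv.
Qed.

Section Comonotone.
Local Open Scope order_scope.
Variables (dS dT dU : Order.disp_t).
Variables (S : orderType dS) (T : orderType dT) (U : porderType dU).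
Variables (f : S -> T -> U) (P : pred U).
Hypothesis f_mono : forall a a' b, a <= a' -> f a b <= f a' b.
Hypothesis f_anti : forall a b b', b <= b' -> f a b' <= f a b.
Hypothesis P_convex : order_convex P.

Lemma comonotone_min x1 x2 y1 y2 :
  P (f x1 y1) -> P (f x2 y2) -> P (f (Order.min x1 x2) (Order.min y1 y2)).
Proof.
wlog x12 : x1 x2 y1 y2 / x1 <= x2.
  move=> sym; case/orP: (le_total x1 x2) => [|x21]; first exact: sym.
  by rewrite minC [Order.min y1 y2]minC => P1 P2; exact: sym x21 P2 P1.
rewrite (min_l x12) => P1 P2; case: leP => [// | /ltW y21].
apply: P_convex P1 P2; [exact: f_anti | exact: f_mono].
Qed.

Lemma comonotone_max x1 x2 y1 y2 :
  P (f x1 y1) -> P (f x2 y2) -> P (f (Order.max x1 x2) (Order.max y1 y2)).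
Proof.
wlog x12 : x1 x2 y1 y2 / x1 <= x2.
  move=> sym; case/orP: (le_total x1 x2) => [|x21]; first exact: sym.
  by rewrite maxC [Order.max y1 y2]maxC => P1 P2; exact: sym x21 P2 P1.
rewrite (max_r x12) => P1 P2; case: leP => [// | /ltW y21].
apply: P_convex P1 P2; [exact: f_mono | exact: f_anti].
Qed.

End Comonotone.

Lemma exists_maximal (T : finType) (r : rel T) (P : pred T) x :
  (forall a b c, r a b -> r b c -> r a c) -> (forall a, ~~ r a a) ->
  P x -> exists2 m, P m & forall y, P y -> ~~ r m y.
Proof.
move=> r_trans r_irr Px.
have [m Pm m_min] := arg_minnP (fun m => #|[set y | r m y]|) Px.
exists m => // y Py; apply/negP => rmy.
have : [set z | r y z] \proper [set z | r m z].
  apply/properP; split; last by exists y; rewrite !inE ?rmy ?(negbTE (r_irr y)).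
  by apply/subsetP => z; rewrite !inE; exact: r_trans.
by move/proper_card; rewrite ltnNge m_min.
Qed.

Section LastEvent.
Variables (n : nat) (E : finType) (G : computation n E).
Implicit Types (C : {set E}) (p : 'I_n).

Definition po_le (e g : E) := (e == g) || po G e g.

Lemma po_asym e g : po G e g -> ~~ po G g e.
Proof. by move=> peg; apply/negP => pge; move: (po_irr G e); rewrite (po_trans peg pge). Qed.

Lemma po_le_trans e g h : po_le e g -> po_le g h -> po_le e h.
Proof.
case/orP => [/eqP -> //| peg] /orP [/eqP <-|pgh]; rewrite /po_le ?peg ?orbT //.
by rewrite (po_trans peg pgh) orbT.
Qed.

Lemma po_le_total e g : proc G e = proc G g -> po_le e g \/ po_le g e.
Proof.
move=> eg; case: (eqVneq e g) => [->|neq]; first by left; rewrite /po_le eqxx.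
by case: (po_total eg (elimN eqP neq)) => [peg|pge]; [left|right];
  rewrite /po_le ?peg ?pge orbT.
Qed.

Lemma consistent_connect C e g :
  consistent G C -> connect (edge G) e g -> g \in C -> e \in C.
Proof.
move=> C_cons /connectP [s + ->]; elim: s e => [|h s IH] e //= /andP [eh hs] Cl.
exact: C_cons eh (IH _ hs Cl).
Qed.

Lemma consistent_po_le C e g : consistent G C -> po_le e g -> g \in C -> e \in C.
Proof.
move=> C_cons /orP [/eqP -> //| peg]; exact: consistent_connect (hb_po peg).
Qed.

Lemma bot_in_cut C p : consistent G C -> C != set0 -> bot G p \in C.
Proof.
move=> C_cons /set0Pn [e Ce].
have bot_le : po_le (bot G (proc G e)) e.
  case: (eqVneq e (bot G (proc G e))) => [<-|neq]; first by rewrite /po_le eqxx.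
  by rewrite /po_le bot_first ?orbT //; exact/eqP.
exact: consistent_connect (bot_scc G p (proc G e)) (consistent_po_le C_cons bot_le Ce).
Qed.

Lemma last_inP C p l :
  last_in G C p l <->
  [/\ l \in C, proc G l = p & forall g, g \in C -> proc G g = p -> po_le g l].
Proof.
split.
  case/and3P => Cl /eqP lp /forallP l_last; split=> // g Cg gp.
  have nplg : ~~ po G l g by move: (l_last g); rewrite Cg gp eqxx.
  case: (po_le_total (etrans gp (esym lp))) => // /orP [/eqP -> | plg].
    by rewrite /po_le eqxx.
  by rewrite plg in nplg.
case=> Cl lp l_last; rewrite /last_in Cl lp eqxx /=.
apply/forallP => g; apply/implyP => /andP [Cg /eqP gp].
case/orP: (l_last g Cg gp) => [/eqP ->|pgl]; [exact: po_irr | exact: po_asym].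
Qed.

Lemma last_in_exists C p : consistent G C -> C != set0 -> exists l, last_in G C p l.
Proof.
move=> C_cons C_n0.
pose onp := [pred e | (e \in C) && (proc G e == p)].
have onp_bot : onp (bot G p) by rewrite /= bot_in_cut // bot_proc eqxx.
have [l /andP [Cl lp] l_max] := exists_maximal (@po_trans _ _ G) (@po_irr _ _ G) onp_bot.
exists l; rewrite /last_in Cl lp /=; apply/forallP => g; apply/implyP; exact: l_max.
Qed.

Lemma last_in_uniq C p l l' : last_in G C p l -> last_in G C p l' -> l = l'.
Proof.
move=> /last_inP [Cl lp l_last] /last_inP [Cl' l'p l'_last].
case/orP: (l'_last l Cl lp) => [/eqP //| pll'].
case/orP: (l_last l' Cl' l'p) => [/eqP -> //| pl'l].
by move: (po_asym pll'); rewrite pl'l.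
Qed.

Lemma var_atE (V : Type) C p (val : E -> V) l :
  last_in G C p l -> var_at G p val C = val l.
Proof.
move=> Ll; rewrite /var_at; case: pickP => [l' Ll'|/(_ l)]; last by rewrite Ll.
by rewrite (last_in_uniq Ll' Ll).
Qed.

Lemma last_in_setI C1 C2 p l : last_in G C1 p l -> l \in C2 -> last_in G (C1 :&: C2) p l.
Proof.
move=> /last_inP [C1l lp l_last] C2l; apply/last_inP; split; rewrite ?inE ?C1l //.
by move=> g /setIP [C1g _]; exact: l_last.
Qed.

Lemma last_in_setU C1 C2 p l1 l2 :
  last_in G C1 p l1 -> last_in G C2 p l2 -> l1 \in C2 -> last_in G (C1 :|: C2) p l2.
Proof.
move=> /last_inP [C1l1 l1p l1_last] /last_inP [C2l2 l2p l2_last] C2l1.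
apply/last_inP; split; rewrite ?inE ?C2l2 ?orbT //.
move=> g /setUP [C1g|C2g] gp; last exact: l2_last.
exact: po_le_trans (l1_last g C1g gp) (l2_last l1 C2l1 l1p).
Qed.

Lemma last_in_total C1 C2 p l1 l2 : consistent G C1 -> consistent G C2 ->
  last_in G C1 p l1 -> last_in G C2 p l2 -> l1 \in C2 \/ l2 \in C1.
Proof.
move=> C1_cons C2_cons /last_inP [C1l1 l1p _] /last_inP [C2l2 l2p _].
case: (po_le_total (etrans l1p (esym l2p))) => le; [left|right].
- exact: consistent_po_le C2_cons le C2l2.
- exact: consistent_po_le C1_cons le C1l1.
Qed.

Section MonotoneVariable.
Local Open Scope order_scope.
Variables (d : Order.disp_t) (T : orderType d) (p : 'I_n) (val : E -> T).
Hypothesis val_mono :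
  forall e g, proc G e = p -> proc G g = p -> po G e g -> val e <= val g.

Lemma last_in_val_le C1 C2 l1 l2 :
  last_in G C1 p l1 -> last_in G C2 p l2 -> l1 \in C2 -> val l1 <= val l2.
Proof.
move=> /last_inP [_ l1p _] /last_inP [_ l2p l2_last] C2l1.
by case/orP: (l2_last l1 C2l1 l1p) => [/eqP -> //| pl1l2]; exact: val_mono.
Qed.

Lemma var_at_setI C1 C2 : consistent G C1 -> consistent G C2 ->
  C1 != set0 -> C2 != set0 ->
  var_at G p val (C1 :&: C2) = Order.min (var_at G p val C1) (var_at G p val C2).
Proof.
move=> C1_cons C2_cons C1_n0 C2_n0.
have [l1 L1] := last_in_exists p C1_cons C1_n0.
have [l2 L2] := last_in_exists p C2_cons C2_n0.
rewrite (var_atE _ L1) (var_atE _ L2).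
case: (last_in_total C1_cons C2_cons L1 L2) => [C2l1|C1l2].
- by rewrite (var_atE _ (last_in_setI L1 C2l1)) min_l // (last_in_val_le L1 L2).
- by rewrite setIC (var_atE _ (last_in_setI L2 C1l2)) min_r // (last_in_val_le L2 L1).
Qed.

Lemma var_at_setU C1 C2 : consistent G C1 -> consistent G C2 ->
  C1 != set0 -> C2 != set0 ->
  var_at G p val (C1 :|: C2) = Order.max (var_at G p val C1) (var_at G p val C2).
Proof.
move=> C1_cons C2_cons C1_n0 C2_n0.
have [l1 L1] := last_in_exists p C1_cons C1_n0.
have [l2 L2] := last_in_exists p C2_cons C2_n0.
rewrite (var_atE _ L1) (var_atE _ L2).
case: (last_in_total C1_cons C2_cons L1 L2) => [C2l1|C1l2].
- by rewrite (var_atE _ (last_in_setU L1 L2 C2l1)) max_r // (last_in_val_le L1 L2).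
- by rewrite setUC (var_atE _ (last_in_setU L2 L1 C1l2)) max_l // (last_in_val_le L2 L1).
Qed.

End MonotoneVariable.
End LastEvent.

Unset Implicit Arguments.

Theorem theorem1 (R : realType) (n : nat) (E : finType) (G : computation n E)
  (f : R -> R -> R)
  (f_mono : forall a a' b, a <= a' -> f a b <= f a' b)
  (f_anti : forall a b b', b <= b' -> f a b' <= f a b)
  (px py : 'I_n) (x y : E -> R)
  (hxy : (nondecreasing_var G px x /\ nondecreasing_var G py y) \/
         (nonincreasing_var G px x /\ nonincreasing_var G py y))
  (c : R) (op : relop) :
  regular G (fun C => eval_relop op (f (var_at G px x C) (var_at G py y C)) c).
Proof.
move=> C1 C2 [C1_cons [C1_n0 _]] [C2_cons [C2_n0 _]] b1 b2.
have P_convex := @eval_relop_convex R op c.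
case: hxy => [[x_mono y_mono] | [x_anti y_anti]].
- rewrite !(var_at_setI _ C1_cons C2_cons C1_n0 C2_n0) //.
  rewrite !(var_at_setU _ C1_cons C2_cons C1_n0 C2_n0) //.
  split; [exact (comonotone_min f_mono f_anti P_convex b1 b2)
        | exact (comonotone_max f_mono f_anti P_convex b1 b2)].
- (* non-increasing variables are non-decreasing for the dual order, and f
     keeps its monotonicity pattern when all three orders are reversed *)
  rewrite !(var_at_setI (T := R^d) _ C1_cons C2_cons C1_n0 C2_n0) //.
  rewrite !(var_at_setU (T := R^d) _ C1_cons C2_cons C1_n0 C2_n0) //.
  have f_mono_dual (a a' b : R^d) : (a <= a' :> R^d)%O -> (f a b <= f a' b :> R^d)%O.
    exact: f_mono.
  have f_anti_dual (a b b' : R^d) : (b <= b' :> R^d)%O -> (f a b' <= f a b :> R^d)%O.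
    exact: f_anti.
  have P_convex_dual := order_convex_dual P_convex.
  split; [exact (comonotone_min f_mono_dual f_anti_dual P_convex_dual b1 b2)
        | exact (comonotone_max f_mono_dual f_anti_dual P_convex_dual b1 b2)].
Qed.
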